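(* Let $G$ be a grid-labelled graph of type $(a,b)$ with $m\ge 1$ edges, none of which is diagonal. Let $\rho_0=|1\rangle\langle 1|\otimes|1\rangle\langle 1|$ on $\mathbb{C}^a\otimes\mathbb{C}^b$. Then there exist local unitaries $U_1,\dots,U_m$ (each of the form $U_x=V_x\otimes W_x$ with $V_x$ unitary on $\mathbb{C}^a$ and $W_x$ unitary on $\mathbb{C}^b$), one for each edge, such that $$\rho(G)=\frac{1}{m}\sum_{x=1}^m U_x\rho_0U_x^\dagger .$$ In particular $\rho(G)$ can be obtained from $\rho_0$ by a protocol using only local unitaries and $\log m$ bits of classical communication (one party samples $x\in[m]$ uniformly and sends it to the other).
   Context: A grid-labelled graph of type $(a,b)$ is a simple graph $G$ whose vertex set is the grid $[a]\times[b]$. Its combinatorial Laplacian is $L(G)=D(G)-A(G)$ (degree matrix minus adjacency matrix), indexed by vertices. If $G$ has $m\ge1$ edges, $\rho(G)=L(G)/(2m)$, viewed as a density matrix on $\mathbb{C}^a\otimes\mathbb{C}^b$ with vertex $(i,j)$ corresponding to the standard basis vector $|i\rangle\otimes|j\rangle$; equivalently $\rho(G)=\frac1m\sum_{\{(i,j),(k,l)\}\in E(G)}|\psi\rangle\langle\psi|$ with $|\psi\rangle=\frac{1}{\sqrt2}(|i\rangle|j\rangle-|k\rangle|l\rangle)$. An edge $\{(i,j),(k,l)\}$ is horizontal if $i=k$, vertical if $j=l$, and diagonal if $i\neq k$ and $j\neq l$. *)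

From HB Require Import structures.
From mathcomp Require Import all_boot all_order all_algebra.
From mathcomp Require Import sesquilinear spectral.
Set Implicit Arguments. Unset Strict Implicit. Unset Printing Implicit Defensive.
Import Order.TTheory GRing.Theory Num.Theory.
Local Open Scope ring_scope.

Section Grid.
Variable C : numClosedFieldType.

Definition adjmx m n (M : 'M[C]_(m, n)) : 'M[C]_(n, m) := (M ^t Num.conj)%sesqui.

(* basis index of |i> (x) |j> in C^a (x) C^b: the library bijection mxvec_index *)
Definition tidx a b (i : 'I_a) (j : 'I_b) : 'I_(a * b) := mxvec_index i j.

Definition kron a b (A : 'M[C]_a) (B : 'M[C]_b) : 'M[C]_(a * b) :=
  \sum_(i1 : 'I_a) \sum_(i2 : 'I_a) \sum_(j1 : 'I_b) \sum_(j2 : 'I_b)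
     (A i1 i2 * B j1 j2) *: delta_mx (tidx i1 j1) (tidx i2 j2).

Definition proj1 n : 'M[C]_n :=
  \matrix_(i, j) (((i : nat) == 0%N) && ((j : nat) == 0%N))%:R.

Definition rho0 a b : 'M[C]_(a * b) := kron (proj1 a) (proj1 b).

Definition simple_grid_graph a b (E : {set {set 'I_a * 'I_b}}) : Prop :=
  forall e, e \in E -> #|e| = 2%N.

Definition degree a b (E : {set {set 'I_a * 'I_b}}) (u : 'I_a * 'I_b) : nat :=
  #|[set e in E | u \in e]|.

Definition lap_entry a b (E : {set {set 'I_a * 'I_b}}) (u v : 'I_a * 'I_b) : C :=
  if u == v then (degree E u)%:R else - ((([set u; v] \in E) : nat)%:R).

Definition laplacian a b (E : {set {set 'I_a * 'I_b}}) : 'M[C]_(a * b) :=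
  \sum_(u : 'I_a * 'I_b) \sum_(v : 'I_a * 'I_b)
     lap_entry E u v *: delta_mx (tidx u.1 u.2) (tidx v.1 v.2).

Definition rhoG a b (E : {set {set 'I_a * 'I_b}}) : 'M[C]_(a * b) :=
  (2 * #|E|)%:R^-1 *: laplacian E.

Definition no_diagonal_edge a b (E : {set {set 'I_a * 'I_b}}) : Prop :=
  forall e, e \in E -> forall u v, u \in e -> v \in e ->
    (u.1 == v.1) || (u.2 == v.2).

End Grid.

(* For an edge {u, v}, rho(G) receives the projector onto (|u> - |v>)/sqrt 2.
   When the edge is horizontal or vertical this vector is a product phi (x) chi
   of unit vectors: one factor is a standard basis vector, the other
   (|j> - |l>)/sqrt 2.  Completing phi and chi to unitaries V, W with these
   first columns (Householder reflections) gives
   (V (x) W) rho_0 (V (x) W)^* = |phi (x) chi><phi (x) chi|, and averaging over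
   the edges yields L(G)/(2m), since L(G) is the sum of the Laplacians of its
   edges. *)
From HB Require Import structures.
From mathcomp Require Import all_boot all_order all_algebra.
From mathcomp Require Import sesquilinear spectral.
From mathcomp Require Import ring.
Set Implicit Arguments. Unset Strict Implicit. Unset Printing Implicit Defensive.
Import Order.TTheory GRing.Theory Num.Theory.
Local Open Scope ring_scope.

Section Adjoint.
Variable C : numClosedFieldType.
Local Notation adj := (@adjmx C _ _).

Lemma adjmxE m n (A : 'M[C]_(m, n)) i j : adj A i j = (A j i)^*.
Proof. by rewrite !mxE. Qed.

Lemma adjmxB m n (A B : 'M[C]_(m, n)) : adj (A - B) = adj A - adj B.
Proof. by apply/matrixP => i j; rewrite !(adjmxE, mxE) rmorphB. Qed.

Lemma adjmxZ m n k (A : 'M[C]_(m, n)) : adj (k *: A) = k^* *: adj A.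
Proof. by apply/matrixP => i j; rewrite !(adjmxE, mxE) rmorphM. Qed.

Lemma adjmxM m n p (A : 'M[C]_(m, n)) (B : 'M[C]_(n, p)) :
  adj (A *m B) = adj B *m adj A.
Proof. by rewrite /adjmx trmx_mul map_mxM. Qed.

Lemma adjmxK m n (A : 'M[C]_(m, n)) : adj (adj A) = A.
Proof. exact: trmxCK. Qed.

Lemma adjmx1 n : adj (1%:M : 'M[C]_n) = 1%:M.
Proof. by rewrite /adjmx trmx1 map_mx1. Qed.

Lemma adjmx_delta m n (i : 'I_m) (j : 'I_n) : adj (delta_mx i j) = delta_mx j i.
Proof. by rewrite /adjmx trmx_delta map_delta_mx. Qed.

Lemma delta_mx11 : delta_mx 0 0 = 1%:M :> 'M[C]_1.
Proof. by apply/matrixP => x y; rewrite !ord1 !mxE. Qed.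

Lemma unitarymx1 n : (1%:M : 'M[C]_n) \is unitarymx.
Proof.
by apply/unitarymxP; change ((1%:M : 'M[C]_n) *m adj 1%:M = 1%:M); rewrite adjmx1 mulmx1.
Qed.

Lemma mul_delta_adjmx n (K : 'M[C]_n) k :
  K *m delta_mx k k *m adj K = col k K *m adj (col k K).
Proof.
rewrite -(mul_delta_mx (0 : 'I_1)) !colE adjmxM adjmx_delta.
by rewrite !mulmxA.
Qed.

Lemma outer_cV_entry n (x : 'cV[C]_n) i j : (x *m adj x) i j = x i 0 * (x j 0)^*.
Proof. by rewrite mxE big_ord1 adjmxE. Qed.

End Adjoint.

Section Householder.
Variables (C : numClosedFieldType) (n : nat).
Local Notation adj := (@adjmx C _ _).
Local Notation e0 := (delta_mx 0 0 : 'cV[C]_n.+1).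

Lemma adj_e0_mul (A : 'cV[C]_n.+1) : adj e0 *m A = (A 0 0)%:M.
Proof. by rewrite adjmx_delta -rowE [LHS]mx11_scalar mxE. Qed.

Lemma adj_mul_e0 (A : 'cV[C]_n.+1) : adj A *m e0 = ((A 0 0)^*)%:M.
Proof. by rewrite -colE [LHS]mx11_scalar !mxE. Qed.

(* The reflection 1 - (2 / c) w w^* along w = e_0 - phi, where c = w^* w. *)
Lemma householder (phi : 'cV[C]_n.+1) :
  adj phi *m phi = 1%:M -> phi 0 0 \is Num.real -> phi 0 0 != 1 ->
  exists U : 'M[C]_n.+1, U \is unitarymx /\ col 0 U = phi.
Proof.
move=> phi_unit phi0_real phi0_ne1.
have phi0_conj := conj_Creal phi0_real.
pose w := e0 - phi; pose c := 2 * (1 - phi 0 0); pose k := 2 / c.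
have c_ne0 : c != 0 by rewrite /c mulf_neq0 ?pnatr_eq0 // subr_eq0 eq_sym.
have k_conj : k^* = k.
  by apply/conj_Creal; rewrite /k /c rpredM ?rpredV ?rpredM ?rpredB ?rpred1 ?realn.
have ww : adj w *m w = c%:M.
  rewrite /w adjmxB mulmxBl !mulmxBr !adj_e0_mul phi_unit adj_mul_e0 phi0_conj.
  have -> : c = 1 - phi 0 0 - (phi 0 0 - 1) by rewrite /c; ring.
  by rewrite mxE !eqxx /= -!(raddfB (@scalar_mx _ _)).
have we0 : adj w *m e0 = (1 - phi 0 0)%:M.
  by rewrite adjmxB mulmxBl adj_e0_mul adj_mul_e0 phi0_conj mxE eqxx raddfB.
pose X := w *m adj w.
have XX : X *m X = c *: X.
  by rewrite /X mulmxA -[w *m _ *m w]mulmxA ww mul_mx_scalar -scalemxAl.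
have X_adj : adj X = X by rewrite /X adjmxM adjmxK.
exists (1%:M - k *: X); split.
  apply/unitarymxP; change ((1%:M - k *: X) *m adj (1%:M - k *: X) = 1%:M).
  rewrite adjmxB adjmx1 adjmxZ k_conj X_adj.
  rewrite mulmxBl !mulmxBr !mul1mx mulmx1 -scalemxAl -scalemxAr XX !scalerA.
  have -> : k * k * c = k *+ 2 by rewrite -mulrA /k mulfVK // mulr_natr.
  by rewrite -scalerMnl mulr2n opprB addrK subrK.
rewrite colE mulmxBl mul1mx -scalemxAl /X -mulmxA we0 mul_mx_scalar scalerA.
have -> : k * (1 - phi 0 0) = 1 by rewrite /k mulrAC -/c mulfV.
by rewrite scale1r /w opprB addrC subrK.
Qed.

End Householder.

Section UnitDiff.
Variable C : numClosedFieldType.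
Local Notation adj := (@adjmx C _ _).

Definition isqrt2 : C := (sqrtC 2)^-1.

Lemma isqrt2_real : isqrt2 \is Num.real.
Proof. by rewrite ger0_real // invr_ge0 sqrtC_ge0 ler0n. Qed.

Lemma isqrt2_sqr : isqrt2 * isqrt2 = 2^-1.
Proof. by rewrite -invfM -expr2 sqrtCK. Qed.

(* The case j = l is the factor along the coordinate that an aligned edge keeps fixed. *)
Definition unit_diff n (j l : 'I_n) : 'cV[C]_n :=
  if j == l then delta_mx j 0 else isqrt2 *: (delta_mx j 0 - delta_mx l 0).

Lemma unit_diffE n (j l i : 'I_n) : unit_diff j l i 0 =
  if j == l then (i == j)%:R else isqrt2 * ((i == j)%:R - (i == l)%:R).
Proof. by rewrite /unit_diff; case: eqP => _; rewrite !mxE ?andbT. Qed.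

Lemma unit_diff_norm n (j l : 'I_n) : adj (unit_diff j l) *m unit_diff j l = 1%:M.
Proof.
rewrite /unit_diff; case: eqVneq => [_|jl].
  by rewrite adjmx_delta mul_delta_mx delta_mx11.
rewrite adjmxZ -scalemxAl -scalemxAr scalerA (conj_Creal isqrt2_real) isqrt2_sqr.
rewrite adjmxB !adjmx_delta mulmxBl !mulmxBr !mul_delta_mx_cond !eqxx.
rewrite (negbTE jl) eq_sym (negbTE jl) /= !mulr0n !mulr1n subr0 sub0r opprK.
by rewrite -mulr2n -scaler_nat scalerA mulVf ?pnatr_eq0 // scale1r delta_mx11.
Qed.

Lemma unit_diff_col_unitary n (j l : 'I_n.+1) :
  exists U : 'M[C]_n.+1, U \is unitarymx /\ col 0 U = unit_diff j l.
Proof.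
have [/andP[/eqP jl /eqP j0]|not_e0] := boolP ((j == l) && (j == 0)).
  by exists 1%:M; rewrite unitarymx1 colE mul1mx /unit_diff jl eqxx -jl j0.
apply: householder; rewrite ?unit_diff_norm // unit_diffE.
  by case: eqP => _; rewrite ?realn // rpredM ?isqrt2_real ?rpredB ?realn.
have sqr_ne1 (x : C) : x * x = 2^-1 -> x != 1.
  by move=> x2; apply: contra_eqN x2 => /eqP->; rewrite mulr1 eq_sym invr_eq1 pnatr_eq1.
case: eqVneq not_e0 => [_ /=|jl _].
  by rewrite eq_sym => /negbTE->; rewrite eq_sym oner_neq0.
case: (eqVneq 0 j) => [j0|_]; case: (eqVneq 0 l) => [l0|_] /=.
- by rewrite -j0 -l0 eqxx in jl.
- by rewrite subr0 mulr1 sqr_ne1 ?isqrt2_sqr.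
- by rewrite sub0r mulrN1 sqr_ne1 // mulrNN isqrt2_sqr.
by rewrite subrr mulr0 eq_sym oner_neq0.
Qed.

End UnitDiff.

Section TensorIndex.
Variables (C : numClosedFieldType) (a b : nat).

Lemma tidx_eq (i k : 'I_a) (j l : 'I_b) :
  (tidx i j == tidx k l) = (i == k) && (j == l).
Proof.
apply/eqP/andP => [/cast_ord_inj/enum_rank_inj[-> ->] //|[/eqP-> /eqP->] //].
Qed.

Lemma tidx_pair_inj : injective (fun u : 'I_a * 'I_b => tidx u.1 u.2).
Proof. by move=> [i j] [k l] /eqP; rewrite tidx_eq => /andP[/eqP/= -> /eqP/= ->]. Qed.

Lemma tidx_surj (k : 'I_(a * b)) : exists i j, k = tidx i j.
Proof. by case/mxvec_indexP: k => i j; exists i, j. Qed.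

Lemma sum_delta_mxE (T : finType) n (g : T -> 'I_n) (f : T -> T -> C) p q :
  injective g ->
  (\sum_u \sum_v f u v *: delta_mx (g u) (g v)) (g p) (g q) = f p q.
Proof.
move=> g_inj; rewrite summxE (bigD1 p) //= addrC big1 ?add0r => [|u up].
  rewrite summxE (bigD1 q) //= addrC big1 ?add0r => [|v vq].
    by rewrite !mxE !eqxx mulr1.
  by rewrite !mxE !(inj_eq g_inj) eqxx eq_sym (negbTE vq) mulr0.
rewrite summxE big1 // => v _.
by rewrite !mxE (inj_eq g_inj) eq_sym (negbTE up) mulr0.
Qed.

Lemma kronE (A : 'M[C]_a) (B : 'M[C]_b) i1 j1 i2 j2 :
  kron A B (tidx i1 j1) (tidx i2 j2) = A i1 i2 * B j1 j2.
Proof.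
have -> : kron A B = \sum_(u : 'I_a * 'I_b) \sum_(v : 'I_a * 'I_b)
    (A u.1 v.1 * B u.2 v.2) *: delta_mx (tidx u.1 u.2) (tidx v.1 v.2).
  rewrite /kron; under eq_bigr do rewrite exchange_big.
  by rewrite pair_bigA; apply: eq_bigr => u _; rewrite pair_bigA.
exact: (sum_delta_mxE _ (i1, j1) (i2, j2) tidx_pair_inj).
Qed.

Lemma kron_delta (i i' : 'I_a) (j j' : 'I_b) :
  kron (delta_mx i i') (delta_mx j j') = delta_mx (tidx i j) (tidx i' j') :> 'M[C]_(a * b).
Proof.
apply/matrixP => k l; have [k1 [k2 ->]] := tidx_surj k; have [l1 [l2 ->]] := tidx_surj l.
by rewrite kronE !mxE !tidx_eq -natrM mulnb andbACA.
Qed.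

End TensorIndex.

Lemma proj1_delta (C : numClosedFieldType) n : proj1 C n.+1 = delta_mx 0 0.
Proof. by apply/matrixP => i j; rewrite !mxE. Qed.

Lemma rho0_delta (C : numClosedFieldType) a b :
  rho0 C a.+1 b.+1 = delta_mx (tidx 0 0) (tidx 0 0).
Proof. by rewrite /rho0 !proj1_delta kron_delta. Qed.

Section EdgeLaplacian.
Variables (C : numClosedFieldType) (T : finType).

Definition edge_vec (u v p : T) : C := (p == u)%:R - (p == v)%:R.

(* For #|e| = 2 this is the Laplacian of the graph whose only edge is e. *)
Definition edge_lap (e : {set T}) (p q : T) : C :=
  ((p \in e) && (q \in e))%:R * (if p == q then 1 else -1).

Lemma edge_vec_notin (u v p : T) : p \notin [set u; v] -> edge_vec u v p = 0.
Proof. by rewrite !inE /edge_vec => /norP[/negbTE-> /negbTE->]; rewrite subrr. Qed.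

Lemma edge_lap_pair (u v p q : T) : u != v ->
  edge_lap [set u; v] p q = edge_vec u v p * edge_vec u v q.
Proof.
move=> uv; rewrite /edge_lap.
case pe: (p \in [set u; v]); last by rewrite edge_vec_notin ?pe //= !mul0r.
case qe: (q \in [set u; v]); last first.
  by rewrite [edge_vec u v q]edge_vec_notin ?qe //= mul0r mulr0.
have vu : v != u by rewrite eq_sym.
rewrite mul1r /edge_vec.
by case/set2P: pe => ->; case/set2P: qe => ->;
  rewrite !eqxx ?(negbTE uv) ?(negbTE vu) /= ?subr0 ?sub0r ?mulr1 ?mulrN1 ?mulN1r ?opprK.
Qed.

Lemma card2_mem2 (e : {set T}) p q : #|e| = 2 -> p != q ->
  (p \in e) && (q \in e) = (e == [set p; q]).
Proof.
move=> e2 pq; apply/idP/eqP => [/andP[pe qe]|->]; last by rewrite !inE !eqxx orbT.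
apply/eqP; rewrite eq_sym eqEcard cards2 pq e2 leqnn andbT.
by rewrite subUset !sub1set pe qe.
Qed.

End EdgeLaplacian.

Section Laplacian.
Variables (C : numClosedFieldType) (a b : nat) (E : {set {set 'I_a * 'I_b}}).
Hypothesis E_simple : simple_grid_graph E.

Lemma laplacianE (p q : 'I_a * 'I_b) :
  laplacian C E (tidx p.1 p.2) (tidx q.1 q.2) = lap_entry C E p q.
Proof. exact: (sum_delta_mxE _ p q (@tidx_pair_inj a b)). Qed.

Lemma lap_entry_sum_edges p q :
  lap_entry C E p q = \sum_(e in E) edge_lap C e p q.
Proof.
rewrite /lap_entry /edge_lap; have [<-|pq] := eqVneq p q.
  rewrite /degree -sumr_const big_mkcond [RHS]big_mkcond /=.
  by apply: eq_bigr => e _; rewrite inE andbb mulr1; case: (e \in E); case: (p \in e).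
rewrite big_mkcond (bigD1 [set p; q]) //= addrC big1 ?add0r => [|e ne].
  by rewrite !inE !eqxx !orbT /=; case: ([set p; q] \in E); rewrite /= ?mulrN1 ?oppr0.
case eE: (e \in E) => //.
by rewrite card2_mem2 ?(E_simple eE) // (negbTE ne) mul0r.
Qed.

Lemma sum_edge_family (c : C) (M : 'I_#|E| -> 'M[C]_(a * b)) :
  (forall x p q, M x (tidx p.1 p.2) (tidx q.1 q.2) = c * edge_lap C (enum_val x) p q) ->
  \sum_x M x = c *: laplacian C E.
Proof.
move=> ME; apply/matrixP => k l.
have [p1 [p2 ->]] := tidx_surj k; have [q1 [q2 ->]] := tidx_surj l.
rewrite summxE mxE (laplacianE (p1, p2) (q1, q2)) lap_entry_sum_edges mulr_sumr.
under eq_bigr do rewrite (ME _ (p1, p2) (q1, q2)).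
by rewrite (big_enum_val (fun e => c * edge_lap C e (p1, p2) (q1, q2))).
Qed.

End Laplacian.

Section Edge.
Variable C : numClosedFieldType.
Local Notation adj := (@adjmx C _ _).

Lemma unit_diff_tensor a b (u v p : 'I_a * 'I_b) :
  u != v -> (u.1 == v.1) || (u.2 == v.2) ->
  unit_diff C u.1 v.1 p.1 0 * unit_diff C u.2 v.2 p.2 0 = isqrt2 C * edge_vec C u v p.
Proof.
case: u v p => [u1 u2] [v1 v2] [p1 p2] /=; rewrite /edge_vec !xpair_eqE !unit_diffE.
have [<-|u1v1] := eqVneq u1 v1; rewrite ?eqxx /=.
  move=> /negbTE u2v2 _; rewrite u2v2.
  by case: (p1 == u1); rewrite /= ?mul1r ?mul0r ?mulr0n ?subr0 ?mulr0.
move=> _ /eqP<-; rewrite eqxx.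
by case: (p2 == u2); rewrite /= ?andbT ?andbF ?mulr1 ?subrr ?mulr0.
Qed.

Lemma edge_local_unitaries a b (u v : 'I_a.+1 * 'I_b.+1) :
  u != v -> (u.1 == v.1) || (u.2 == v.2) ->
  exists (V : 'M[C]_a.+1) (W : 'M[C]_b.+1),
    [/\ V \is unitarymx, W \is unitarymx & forall p q,
      (kron V W *m rho0 C a.+1 b.+1 *m adj (kron V W)) (tidx p.1 p.2) (tidx q.1 q.2)
        = 2^-1 * edge_lap C [set u; v] p q].
Proof.
move=> uv aligned.
have [V [V_unitary V0]] := unit_diff_col_unitary C u.1 v.1.
have [W [W_unitary W0]] := unit_diff_col_unitary C u.2 v.2.
have psiE (p : 'I_a.+1 * 'I_b.+1) :
    col (tidx 0 0) (kron V W) (tidx p.1 p.2) 0 = isqrt2 C * edge_vec C u v p.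
  move/matrixP/(_ p.1 0): V0; move/matrixP/(_ p.2 0): W0; rewrite !mxE => W0 V0.
  by rewrite kronE V0 W0 unit_diff_tensor.
exists V, W; split => // p q.
have psi_real : isqrt2 C * edge_vec C u v q \is Num.real.
  by rewrite rpredM ?isqrt2_real ?rpredB ?realn.
rewrite rho0_delta mul_delta_adjmx outer_cV_entry !psiE (conj_Creal psi_real).
by rewrite mulrACA isqrt2_sqr edge_lap_pair.
Qed.

End Edge.

Lemma grid_dims_pos a b (E : {set {set 'I_a * 'I_b}}) :
  simple_grid_graph E -> (0 < #|E|)%N -> (0 < a)%N && (0 < b)%N.
Proof.
move=> E_simple /card_gt0P[e /E_simple e2].
have /card_gt0P[[i j] _] : (0 < #|e|)%N by rewrite e2.
by rewrite (leq_ltn_trans _ (ltn_ord i)) ?(leq_ltn_trans _ (ltn_ord j)).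
Qed.

Unset Implicit Arguments.

Theorem mainTheorem2 (C : numClosedFieldType) (a b : nat)
    (E : {set {set 'I_a * 'I_b}}) :
  simple_grid_graph E ->
  (1 <= #|E|)%N ->
  no_diagonal_edge E ->
  exists (V : 'I_#|E| -> 'M[C]_a) (W : 'I_#|E| -> 'M[C]_b),
    (forall x, V x \is unitarymx /\ W x \is unitarymx) /\
    rhoG C E =
      (#|E|%:R)^-1 *: \sum_(x < #|E|)
          (kron (V x) (W x) *m rho0 C a b *m adjmx (kron (V x) (W x))).
Proof.
move=> E_simple E_nonempty E_nodiag.
have /andP[] := grid_dims_pos E_simple E_nonempty.
case: a E E_simple E_nonempty E_nodiag => // a; case: b => // b.
move=> E E_simple E_nonempty E_nodiag _ _.
have edge_unitaries (x : 'I_#|E|) : exists VW : 'M[C]_a.+1 * 'M[C]_b.+1,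
    [/\ VW.1 \is unitarymx, VW.2 \is unitarymx & forall p q,
      (kron VW.1 VW.2 *m rho0 C a.+1 b.+1 *m adjmx (kron VW.1 VW.2))
        (tidx p.1 p.2) (tidx q.1 q.2) = 2^-1 * edge_lap C (enum_val x) p q].
  have xE := enum_valP x.
  have /cards2P[u [v [uv ex]]] : #|enum_val x| == 2 by rewrite E_simple.
  have aligned : (u.1 == v.1) || (u.2 == v.2).
    by apply: (E_nodiag _ xE); rewrite ex !inE eqxx ?orbT.
  have [V [W VW]] := edge_local_unitaries C uv aligned.
  by exists (V, W); rewrite ex.
have [VW VWE] := fin_all_exists edge_unitaries.
exists (fun x => (VW x).1), (fun x => (VW x).2); split; first by move=> x; case: (VWE x).
rewrite (sum_edge_family E_simple (c := 2^-1)) => [|x]; last by case: (VWE x).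
by rewrite /rhoG scalerA natrM invfM mulrC.
Qed.
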